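(* In the session calculus, strong fairness of actions (SA) is weaker than strong fairness of components (SC): every SC-fair path is SA-fair. Likewise, weak fairness of actions (WA) is weaker than weak fairness of components (WC): every WC-fair path is WA-fair.
   Context: Session calculus: threads $P ::= \mathbf{end} \mid \bigoplus_{i\in I} p_i!\lambda_i;P_i \mid \sum_{i\in I} p_i?\lambda_i;P_i \mid X \mid \mu X.P$ (guarded recursion), thread states additionally $\langle q!\lambda\rangle;P$; networks $p[\![P]\!]\mid 0\mid N\parallel N$ with distinct locations and closed threads, modulo associativity/commutativity/unit. Transitions: (choice) $p[\![\bigoplus_{i\in I}p_i!\lambda_i;P_i]\!]\parallel N \xrightarrow{\tau} p[\![\langle p_k!\lambda_k\rangle;P_k]\!]\parallel N$; (unfold) $p[\![\mu X.P]\!]\parallel N\xrightarrow{\tau} p[\![P\{\mu X.P/X\}]\!]\parallel N$; (comm) $p_k[\![\langle q!\lambda_k\rangle;Q]\!]\parallel q[\![\sum_{i\in I}p_i?\lambda_i;P_i]\!]\parallel N \xrightarrow{(p_k,\lambda_k,q)} p_k[\![Q]\!]\parallel q[\![P_k]\!]\parallel N$. $\mathrm{comp}(t)$ is the moving location for a $\tau$-transition and $\{p,q\}$ for label $(p,\lambda,q)$. A path is a network state with a maximal sequence of transitions. For a notion of task: relentlessly enabled on a path = enabled in some state of every suffix; perpetually enabled = enabled in every state; a path $\pi$ is strongly (weakly) fair if for every suffix $\pi'$ each task relentlessly (perpetually) enabled on $\pi'$ is engaged in by $\pi'$. Components (SC/WC): tasks are locations $p$; enabled in $N$ if some transition $t$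 from $N$ has $p\in\mathrm{comp}(t)$; engaged in if the path contains such $t$. Actions (SA/WA): tasks are transition labels $\alpha$ (either $\tau$ or $(p,\lambda,q)$); enabled in $N$ if some transition labelled $\alpha$ leaves $N$; engaged in if the path contains a transition labelled $\alpha$. *)

From Stdlib Require Import List Arith.
Import ListNotations.

Definition loc := nat.
Definition lab := nat.
Definition var := nat.

(* Threads and thread states.  [TOut q l P] is the thread state <q!l>;P;
   [TSend] is internal choice (+)_{i in I} p_i!l_i;P_i and [TRecv] is the
   external choice Sum_{i in I} p_i?l_i;P_i, the index set I being
   represented by a list of branches. *)
Inductive thread : Type :=
| TEnd : thread
| TSend : list (loc * lab * thread) -> thread
| TRecv : list (loc * lab * thread) -> thread
| TVar : var -> thread
| TMu : var -> thread -> thread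
| TOut : loc -> lab -> thread -> thread.

(* Substitution P{Q/X} (used only with Q closed, so no capture issues). *)
Fixpoint subst (X : var) (Q : thread) (P : thread) : thread :=
  match P with
  | TEnd => TEnd
  | TSend bs => TSend (map (fun b => match b with (p, l, P') => (p, l, subst X Q P') end) bs)
  | TRecv bs => TRecv (map (fun b => match b with (p, l, P') => (p, l, subst X Q P') end) bs)
  | TVar Y => if Nat.eqb X Y then Q else TVar Y
  | TMu Y P' => if Nat.eqb X Y then TMu Y P' else TMu Y (subst X Q P')
  | TOut q l P' => TOut q l (subst X Q P')
  end.

Fixpoint closed_in (bound : list var) (P : thread) : Prop :=
  match P with
  | TEnd => True
  | TSend bs | TRecv bs =>
      (fix go (bs : list (loc * lab * thread)) : Prop :=
         match bs with
         | [] => True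
         | (_, _, P') :: bs' => closed_in bound P' /\ go bs'
         end) bs
  | TVar X => In X bound
  | TMu X P' => closed_in (X :: bound) P'
  | TOut _ _ P' => closed_in bound P'
  end.

Fixpoint unguarded (X : var) (P : thread) : Prop :=
  match P with
  | TVar Y => X = Y
  | TMu Y P' => Y <> X /\ unguarded X P'
  | _ => False
  end.

Fixpoint guarded_rec (P : thread) : Prop :=
  match P with
  | TEnd | TVar _ => True
  | TSend bs | TRecv bs =>
      (fix go (bs : list (loc * lab * thread)) : Prop :=
         match bs with
         | [] => True
         | (_, _, P') :: bs' => guarded_rec P' /\ go bs'
         end) bs
  | TMu X P' => ~ unguarded X P' /\ guarded_rec P'
  | TOut _ _ P' => guarded_rec P'
  end.

Fixpoint no_out (P : thread) : Prop :=
  match P with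
  | TEnd | TVar _ => True
  | TSend bs | TRecv bs =>
      (fix go (bs : list (loc * lab * thread)) : Prop :=
         match bs with
         | [] => True
         | (_, _, P') :: bs' => no_out P' /\ go bs'
         end) bs
  | TMu _ P' => no_out P'
  | TOut _ _ _ => False
  end.

Definition wf_thread (P : thread) : Prop :=
  no_out P /\ closed_in [] P /\ guarded_rec P.

Definition wf_state (S : thread) : Prop :=
  match S with
  | TOut _ _ P => wf_thread P
  | _ => wf_thread S
  end.

(* Networks p1[[S1]] || ... || pn[[Sn]] (modulo assoc./comm./unit) as lists. *)
Definition net := list (loc * thread).

Definition wf_net (N : net) : Prop :=
  NoDup (map fst N) /\ Forall (fun ps => wf_state (snd ps)) N.

Fixpoint upd {A : Type} (l : list A) (i : nat) (a : A) : list A :=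
  match l, i with
  | [], _ => []
  | _ :: l', 0 => a :: l'
  | x :: l', S i' => x :: upd l' i' a
  end.

Inductive trans : Type :=
| TrTau : loc -> trans
| TrComm : loc -> lab -> loc -> trans.

Inductive label : Type :=
| LTau : label
| LComm : loc -> lab -> loc -> label.

Definition lab_of (t : trans) : label :=
  match t with
  | TrTau _ => LTau
  | TrComm p l q => LComm p l q
  end.

Definition comp (t : trans) : list loc :=
  match t with
  | TrTau p => [p]
  | TrComm p _ q => [p; q]
  end.

Inductive step : net -> trans -> net -> Prop :=
| st_choice : forall N i p bs q l P,
    nth_error N i = Some (p, TSend bs) ->
    In (q, l, P) bs ->
    step N (TrTau p) (upd N i (p, TOut q l P))
| st_unfold : forall N i p X P,
    nth_error N i = Some (p, TMu X P) ->
    step N (TrTau p) (upd N i (p, subst X (TMu X P) P))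
| st_comm : forall N i j p q l Q bs P,
    i <> j ->
    nth_error N i = Some (p, TOut q l Q) ->
    nth_error N j = Some (q, TRecv bs) ->
    In (p, l, P) bs ->
    step N (TrComm p l q) (upd (upd N i (p, Q)) j (q, P)).

(* Paths: a network state with a maximal (finite or infinite) sequence of
   transitions.  [plen = Some n]: states pst 0 .. pst n and transitions
   ptr 0 .. ptr (n-1), with no transition leaving pst n.  [plen = None]:
   infinite path.  Values outside the range are irrelevant. *)
Record path : Type := mkPath {
  pst : nat -> net;
  ptr : nat -> trans;
  plen : option nat
}.

Definition st_in (π : path) (i : nat) : Prop :=
  match plen π with None => True | Some n => i <= n end.

Definition tr_in (π : path) (i : nat) : Prop :=
  match plen π with None => True | Some n => i < n end.

Definition is_path (π : path) : Prop :=
  wf_net (pst π 0) /\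
  (forall i, tr_in π i -> step (pst π i) (ptr π i) (pst π (S i))) /\
  (forall n, plen π = Some n -> forall t N', ~ step (pst π n) t N').

(* Generic fairness w.r.t. a notion of task.  Suffixes of π are indexed by
   their starting position k (with st_in π k). *)
Section Fairness.
Context {Task : Type} (enabled : net -> Task -> Prop) (engages : trans -> Task -> Prop).

Definition relentlessly_enabled (π : path) (k : nat) (T : Task) : Prop :=
  forall j, k <= j -> st_in π j -> exists i, j <= i /\ st_in π i /\ enabled (pst π i) T.

Definition perpetually_enabled (π : path) (k : nat) (T : Task) : Prop :=
  forall i, k <= i -> st_in π i -> enabled (pst π i) T.

Definition engaged_in (π : path) (k : nat) (T : Task) : Prop :=
  exists i, k <= i /\ tr_in π i /\ engages (ptr π i) T.

Definition strongly_fair (π : path) : Prop :=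
  forall k, st_in π k -> forall T, relentlessly_enabled π k T -> engaged_in π k T.

Definition weakly_fair (π : path) : Prop :=
  forall k, st_in π k -> forall T, perpetually_enabled π k T -> engaged_in π k T.
End Fairness.

Definition comp_enabled (N : net) (p : loc) : Prop :=
  exists t N', step N t N' /\ In p (comp t).
Definition comp_engages (t : trans) (p : loc) : Prop := In p (comp t).

Definition act_enabled (N : net) (a : label) : Prop :=
  exists t N', step N t N' /\ lab_of t = a.
Definition act_engages (t : trans) (a : label) : Prop := lab_of t = a.

Definition SC_fair := strongly_fair comp_enabled comp_engages.
Definition WC_fair := weakly_fair comp_enabled comp_engages.
Definition SA_fair := strongly_fair act_enabled act_engages.
Definition WA_fair := weakly_fair act_enabled act_engages.

From Stdlib Require Import List Arith Lia Classical.
Import ListNotations.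

(* The argument is local to the location responsible for an enabled action.
   - A communication (p,l,q) is enabled only when p holds the output state
     <q!l>;Q.  Since p is then enabled as a component, (relentless resp.
     perpetual) enabledness of the action transfers to the component p, so
     component fairness makes p move.  Until its first move p keeps the
     state <q!l>;Q (other transitions do not touch it), and a move of a
     location in that state is exactly the communication (p,l,q).
   - A tau action is enabled when some p holds a choice or a recursion.
     Either p moves later -- and its first move, from that same state, is a
     tau step -- or p never moves again, so it stays perpetually enabled,
     which component fairness forbids. *)

Lemma nth_error_upd_other {A : Type} (l : list A) (i j : nat) (a : A) :
  i <> j -> nth_error (upd l i a) j = nth_error l j.
Proof.
  revert i j; induction l as [|x l IH]; intros [|i] [|j] Hij; simpl; auto; try lia.
  all: apply IH; lia.
Qed.

Lemma map_fst_upd (N : net) (i : nat) (p : loc) (St St' : thread) :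
  nth_error N i = Some (p, St) -> map fst (upd N i (p, St')) = map fst N.
Proof.
  revert i; induction N as [|[a b] N IH]; intros [|i] H; simpl in *; try discriminate.
  - now inversion H.
  - now rewrite (IH i H).
Qed.

Lemma nodup_position (N : net) (i j : nat) (p : loc) (St St' : thread) :
  NoDup (map fst N) -> nth_error N i = Some (p, St) -> nth_error N j = Some (p, St') ->
  i = j.
Proof.
  intros Hnd Hi Hj.
  assert (Hi' : nth_error (map fst N) i = Some p) by (now rewrite nth_error_map, Hi).
  assert (Hj' : nth_error (map fst N) j = Some p) by (now rewrite nth_error_map, Hj).
  apply (NoDup_nth_error (map fst N)); auto.
  - apply nth_error_Some; congruence.
  - congruence.
Qed.

Lemma step_nodup (N N' : net) (t : trans) :
  step N t N' -> NoDup (map fst N) -> NoDup (map fst N').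
Proof.
  intros Hst Hnd; destruct Hst as [? ? ? ? ? ? ? Hi _ | ? ? ? ? ? Hi
                                  | ? i j ? ? ? ? ? ? Hij Hi Hj _].
  - now erewrite map_fst_upd by eauto.
  - now erewrite map_fst_upd by eauto.
  - erewrite map_fst_upd; [erewrite map_fst_upd by eauto; exact Hnd|].
    rewrite nth_error_upd_other; eauto.
Qed.

Lemma step_frame (N N' : net) (t : trans) (m : nat) (p : loc) (St : thread) :
  step N t N' -> ~ In p (comp t) ->
  nth_error N m = Some (p, St) -> nth_error N' m = Some (p, St).
Proof.
  intros Hst Hp Hm.
  destruct Hst as [? i p0 ? ? ? ? Hi _ | ? i p0 ? ? Hi | ? i j p0 q0 ? ? ? ? _ Hi Hj _];
    simpl in Hp.
  - rewrite nth_error_upd_other; [exact Hm|].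
    intros <-; rewrite Hm in Hi; injection Hi as ->; tauto.
  - rewrite nth_error_upd_other; [exact Hm|].
    intros <-; rewrite Hm in Hi; injection Hi as ->; tauto.
  - rewrite !nth_error_upd_other; [exact Hm | |].
    + intros <-; rewrite Hm in Hi; injection Hi as ->; tauto.
    + intros <-; rewrite Hm in Hj; injection Hj as ->; tauto.
Qed.

Definition tau_ready (St : thread) : Prop :=
  match St with
  | TSend bs => bs <> []
  | TMu _ _ => True
  | _ => False
  end.

Lemma moving_location_cases (N N' : net) (t : trans) (m : nat) (p : loc) (St : thread) :
  NoDup (map fst N) -> nth_error N m = Some (p, St) -> step N t N' -> In p (comp t) ->
  (t = TrTau p /\ tau_ready St) \/
  (exists l q Q, t = TrComm p l q /\ St = TOut q l Q) \/
  (exists p' l bs, t = TrComm p' l p /\ St = TRecv bs).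
Proof.
  intros Hnd Hm Hst Hp.
  destruct Hst as [? i p0 bs ? ? ? Hi Hin | ? i p0 ? ? Hi | ? i j p0 q0 l Q bs ? _ Hi Hj _];
    simpl in Hp.
  - destruct Hp as [<- | []].
    rewrite (nodup_position _ _ _ _ _ _ Hnd Hi Hm) in Hi; rewrite Hm in Hi.
    injection Hi as ->. left; split; [reflexivity|].
    simpl; intros ->; destruct Hin.
  - destruct Hp as [<- | []].
    rewrite (nodup_position _ _ _ _ _ _ Hnd Hi Hm) in Hi; rewrite Hm in Hi.
    injection Hi as ->. now left.
  - destruct Hp as [<- | [<- | []]].
    + rewrite (nodup_position _ _ _ _ _ _ Hnd Hi Hm) in Hi; rewrite Hm in Hi.
      injection Hi as ->. right; left; eauto.
    + rewrite (nodup_position _ _ _ _ _ _ Hnd Hj Hm) in Hj; rewrite Hm in Hj.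
      injection Hj as ->. right; right; eauto.
Qed.

Lemma sender_moves_by_comm (N N' : net) (t : trans) (m : nat) (p q : loc) (l : lab)
    (Q : thread) :
  NoDup (map fst N) -> nth_error N m = Some (p, TOut q l Q) -> step N t N' ->
  In p (comp t) -> lab_of t = LComm p l q.
Proof.
  intros Hnd Hm Hst Hp.
  destruct (moving_location_cases N N' t m p _ Hnd Hm Hst Hp)
    as [[_ []] | [[l' [q' [Q' [-> Heq]]]] | [p' [l' [bs [_ Heq]]]]]];
    try discriminate.
  now injection Heq as -> -> _.
Qed.

Lemma tau_ready_moves_by_tau (N N' : net) (t : trans) (m : nat) (p : loc) (St : thread) :
  NoDup (map fst N) -> nth_error N m = Some (p, St) -> tau_ready St -> step N t N' ->
  In p (comp t) -> lab_of t = LTau.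
Proof.
  intros Hnd Hm Hready Hst Hp.
  destruct (moving_location_cases N N' t m p St Hnd Hm Hst Hp)
    as [[-> _] | [[l [q [Q [_ ->]]]] | [p' [l [bs [_ ->]]]]]];
    [reflexivity | destruct Hready | destruct Hready].
Qed.

Lemma tau_ready_enabled (N : net) (m : nat) (p : loc) (St : thread) :
  nth_error N m = Some (p, St) -> tau_ready St -> comp_enabled N p.
Proof.
  intros Hm Hready; exists (TrTau p).
  destruct St as [| [| [[q l] P] bs] | | | X P |]; simpl in Hready;
    try contradiction.
  - eexists; split; [eapply st_choice; [exact Hm | left; reflexivity] | now left].
  - eexists; split; [eapply st_unfold; exact Hm | now left].
Qed.

Lemma tau_enabled_source (N : net) :
  act_enabled N LTau ->
  exists m p St, nth_error N m = Some (p, St) /\ tau_ready St.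
Proof.
  intros [[p | p l q] [N' [Hst Hl]]]; [|discriminate].
  inversion Hst as [? i ? bs ? ? ? Hi Hin | ? i ? X P Hi |]; subst.
  - exists i, p, (TSend bs); split; [exact Hi|]. simpl; intros ->; destruct Hin.
  - exists i, p, (TMu X P); now split.
Qed.

Lemma comm_enabled_source (N : net) (p q : loc) (l : lab) :
  act_enabled N (LComm p l q) ->
  exists m Q, nth_error N m = Some (p, TOut q l Q).
Proof.
  intros [[p' | p' l' q'] [N' [Hst Hl]]]; [discriminate|].
  injection Hl as -> -> ->.
  inversion Hst; subst; eauto.
Qed.

Lemma comm_enabled_sender (N : net) (p q : loc) (l : lab) :
  act_enabled N (LComm p l q) -> comp_enabled N p.
Proof.
  intros [[p' | p' l' q'] [N' [Hst Hl]]]; [discriminate|].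
  injection Hl as -> -> ->. exists (TrComm p l q), N'; split; [exact Hst | now left].
Qed.

Lemma st_in_le (π : path) (i j : nat) : j <= i -> st_in π i -> st_in π j.
Proof. unfold st_in; destruct (plen π); auto; lia. Qed.

Lemma tr_in_st_in (π : path) (i : nat) : tr_in π i -> st_in π i.
Proof. unfold st_in, tr_in; destruct (plen π); auto; lia. Qed.

Lemma st_in_tr_in (π : path) (i j : nat) : i < j -> st_in π j -> tr_in π i.
Proof. unfold st_in, tr_in; destruct (plen π); auto; lia. Qed.

Lemma path_step (π : path) (i : nat) :
  is_path π -> tr_in π i -> step (pst π i) (ptr π i) (pst π (S i)).
Proof. intros [_ [Hsteps _]]; apply Hsteps. Qed.

Lemma path_nodup (π : path) (j : nat) :
  is_path π -> st_in π j -> NoDup (map fst (pst π j)).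
Proof.
  intros HP; induction j as [|j IH]; intros Hj.
  - destruct HP as [[Hnd _] _]; exact Hnd.
  - apply (step_nodup (pst π j) _ (ptr π j)).
    + apply path_step; auto; eapply st_in_tr_in; eauto.
    + apply IH; eapply st_in_le; [|eauto]; lia.
Qed.

Lemma state_persists_until_move (π : path) (i m : nat) (p : loc) (St : thread) :
  is_path π -> nth_error (pst π i) m = Some (p, St) ->
  forall j, i <= j -> st_in π j ->
  nth_error (pst π j) m = Some (p, St) \/
  exists k, i <= k < j /\ In p (comp (ptr π k)) /\ nth_error (pst π k) m = Some (p, St).
Proof.
  intros HP Hm j; induction j as [|j IH]; intros Hij Hj.
  - left; now replace i with 0 in Hm by lia.
  - destruct (Nat.eq_dec i (S j)) as [<- | Hne]; [now left|].
    destruct (IH ltac:(lia) ltac:(eapply st_in_le; [|eauto]; lia))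
      as [Hstate | [k [Hk Hmove]]].
    + destruct (in_dec Nat.eq_dec p (comp (ptr π j))) as [Hin | Hout].
      * right; exists j; split; [lia | auto].
      * left; apply (step_frame (pst π j) _ (ptr π j)); auto.
        apply path_step; auto; eapply st_in_tr_in; eauto.
    + right; exists k; split; [lia | auto].
Qed.

Lemma first_move_state (π : path) (i m : nat) (p : loc) (St : thread) :
  is_path π -> nth_error (pst π i) m = Some (p, St) -> engaged_in comp_engages π i p ->
  exists j, i <= j /\ tr_in π j /\ In p (comp (ptr π j)) /\
            nth_error (pst π j) m = Some (p, St).
Proof.
  intros HP Hm [j [Hij [Hj Hmove]]].
  destruct (state_persists_until_move π i m p St HP Hm j Hij (tr_in_st_in π j Hj))
    as [Hstate | [k [Hk [Hmovek Hstate]]]].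
  - exists j; auto.
  - exists k; repeat split; auto; try lia.
    eapply st_in_tr_in; [|apply tr_in_st_in; eauto]; lia.
Qed.

Lemma comm_engaged_by_sender (π : path) (i : nat) (p q : loc) (l : lab) :
  is_path π -> st_in π i -> act_enabled (pst π i) (LComm p l q) ->
  engaged_in comp_engages π i p -> engaged_in act_engages π i (LComm p l q).
Proof.
  intros HP Hi Hen Hmoves.
  destruct (comm_enabled_source _ _ _ _ Hen) as [m [Q Hm]].
  destruct (first_move_state π i m p _ HP Hm Hmoves) as [j [Hij [Hj [Hmove Hmj]]]].
  exists j; repeat split; auto.
  apply (sender_moves_by_comm (pst π j) (pst π (S j)) (ptr π j) m p q l Q);
    auto using path_nodup, path_step, tr_in_st_in.
Qed.

Lemma tau_engaged_or_stuck (π : path) (i : nat) :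
  is_path π -> st_in π i -> act_enabled (pst π i) LTau ->
  engaged_in act_engages π i LTau \/
  exists p, perpetually_enabled comp_enabled π i p /\ ~ engaged_in comp_engages π i p.
Proof.
  intros HP Hi Hen.
  destruct (tau_enabled_source _ Hen) as [m [p [St [Hm Hready]]]].
  destruct (classic (engaged_in comp_engages π i p)) as [Hmoves | Hidle].
  - left. destruct (first_move_state π i m p St HP Hm Hmoves) as [j [Hij [Hj [Hmove Hmj]]]].
    exists j; repeat split; auto.
    apply (tau_ready_moves_by_tau (pst π j) (pst π (S j)) (ptr π j) m p St);
      auto using path_nodup, path_step, tr_in_st_in.
  - right; exists p; split; [|exact Hidle].
    intros j Hij Hj.
    destruct (state_persists_until_move π i m p St HP Hm j Hij Hj)
      as [Hstate | [k [Hk [Hmovek _]]]].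
    + eapply tau_ready_enabled; eauto.
    + exfalso; apply Hidle; exists k; repeat split; try lia; auto.
      eapply st_in_tr_in; [|eauto]; lia.
Qed.

Section GenericFairness.
Context {Task : Type} (enabled : net -> Task -> Prop) (engages : trans -> Task -> Prop).

Lemma perpetually_relentlessly (π : path) (k : nat) (T : Task) :
  perpetually_enabled enabled π k T -> relentlessly_enabled enabled π k T.
Proof. intros Hper j Hkj Hj; exists j; auto. Qed.

Lemma strongly_weakly_fair (π : path) :
  strongly_fair enabled engages π -> weakly_fair enabled engages π.
Proof. intros Hfair k Hk T Hper; apply Hfair; auto using perpetually_relentlessly. Qed.

Lemma relentlessly_enabled_later (π : path) (k i : nat) (T : Task) :
  k <= i -> relentlessly_enabled enabled π k T -> relentlessly_enabled enabled π i T.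
Proof. intros Hki Hrel j Hij; apply Hrel; lia. Qed.

Lemma engaged_in_earlier (π : path) (k i : nat) (T : Task) :
  k <= i -> engaged_in engages π i T -> engaged_in engages π k T.
Proof. intros Hki [j [Hij Hj]]; exists j; split; [lia | exact Hj]. Qed.
End GenericFairness.

Section EnablednessTransfer.
Context {Task1 Task2 : Type} (enabled1 : net -> Task1 -> Prop)
  (enabled2 : net -> Task2 -> Prop) (T1 : Task1) (T2 : Task2).
Hypothesis enabled_transfer : forall N, enabled1 N T1 -> enabled2 N T2.

Lemma relentlessly_transfer (π : path) (k : nat) :
  relentlessly_enabled enabled1 π k T1 -> relentlessly_enabled enabled2 π k T2.
Proof.
  intros Hrel j Hkj Hj.
  destruct (Hrel j Hkj Hj) as [i [Hji [Hi Hen]]]; eauto.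
Qed.

Lemma perpetually_transfer (π : path) (k : nat) :
  perpetually_enabled enabled1 π k T1 -> perpetually_enabled enabled2 π k T2.
Proof. intros Hper i Hki Hi; auto. Qed.
End EnablednessTransfer.

Lemma WC_fair_WA_fair (π : path) : is_path π -> WC_fair π -> WA_fair π.
Proof.
  intros HP Hfair k Hk a Hper.
  pose proof (Hper k (le_n k) Hk) as Hen.
  destruct a as [| p l q].
  - destruct (tau_engaged_or_stuck π k HP Hk Hen) as [Hdone | [p [Hpen Hidle]]];
      [exact Hdone|].
    exfalso; exact (Hidle (Hfair k Hk p Hpen)).
  - apply comm_engaged_by_sender; auto.
    apply Hfair; auto.
    apply (perpetually_transfer act_enabled comp_enabled (LComm p l q) p
             (fun N => comm_enabled_sender N p q l)), Hper.
Qed.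

Lemma SC_fair_SA_fair (π : path) : is_path π -> SC_fair π -> SA_fair π.
Proof.
  intros HP Hfair k Hk a Hrel.
  destruct (Hrel k (le_n k) Hk) as [i [Hki [Hi Hen]]].
  apply (engaged_in_earlier _ _ k i); [exact Hki|].
  destruct a as [| p l q].
  - destruct (tau_engaged_or_stuck π i HP Hi Hen) as [Hdone | [p [Hpen Hidle]]];
      [exact Hdone|].
    exfalso; exact (Hidle (strongly_weakly_fair _ _ _ Hfair i Hi p Hpen)).
  - apply comm_engaged_by_sender; auto.
    apply Hfair; auto.
    apply (relentlessly_transfer act_enabled comp_enabled (LComm p l q) p
             (fun N => comm_enabled_sender N p q l)).
    apply (relentlessly_enabled_later _ _ k); assumption.
Qed.

Theorem mainTheorem14 (π : path) :
  is_path π ->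
  (SC_fair π -> SA_fair π) /\ (WC_fair π -> WA_fair π).
Proof.
  intros HP; split.
  - exact (SC_fair_SA_fair π HP).
  - exact (WC_fair_WA_fair π HP).
Qed.
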